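(* Let $\mathcal H$, $\mathcal O$, $\mathcal U$, $e_a$, $X_{e_a}$, $Y_{e_a}$ be as in the context. Identify $\mathcal O^*$ with $\mathcal O$ via $\xi(a)=\operatorname{tr}(\widetilde\xi a)$, and for $1\le k\le n$ let $\mathcal D^k=\{\xi\in\mathcal O^*:\widetilde\xi\ge0,\ \operatorname{tr}\widetilde\xi=1,\ \operatorname{rank}\widetilde\xi=k\}$ (the density operators of rank $k$), which is a smooth embedded submanifold of $\mathcal O^*$ contained in $\mathcal U$. Then for every $a\in\mathcal O$ and every $k$, the vector fields $X_{e_a}$ and $Y_{e_a}$ are tangent to $\mathcal D^k$ at every point of $\mathcal D^k$. Explicitly, at $\rho\in\mathcal D^k$, the tangent vectors $X_{e_a}(\rho)$ and $Y_{e_a}(\rho)$ correspond to the Hermitian operators $\tfrac{i}{2}[a,\widetilde\rho]$ and $\tfrac12(a\widetilde\rho+\widetilde\rho a)-\operatorname{tr}(\widetilde\rho a)\widetilde\rho$ respectively.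
   Context: $\mathcal H$ is a complex Hilbert space of dimension $n<\infty$; $\mathcal O$ the real vector space of Hermitian operators; $[[a,b]]=-\tfrac{i}{2}(ab-ba)$, $a\odot b=\tfrac12(ab+ba)$; $f_a(\xi)=\xi(a)$; $\mathcal U=\{\xi:\xi(\mathbb I)\neq0\}$; $e_a=f_a/f_{\mathbb I}$ on $\mathcal U$. $\Lambda_{\mathcal D},\mathcal R_{\mathcal D}$ are the contravariant 2-tensors on $\mathcal U$ with $\Lambda_{\mathcal D}(de_a,de_b)=e_{[[a,b]]}$, $\mathcal R_{\mathcal D}(de_a,de_b)=e_{a\odot b}-e_ae_b$, and all pairings of $df_{\mathbb I}$ with $de_a$ or $df_{\mathbb I}$ equal to $0$; $X_f(g)=\Lambda_{\mathcal D}(df,dg)$, $Y_f(g)=\mathcal R_{\mathcal D}(df,dg)$. *)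

From Stdlib Require Import Reals List.
Import ListNotations.
Open Scope R_scope.

Record C : Type := mkC { Re : R ; Im : R }.
Definition C0 : C := mkC 0 0.
Definition C1 : C := mkC 1 0.
Definition RtoC (r : R) : C := mkC r 0.
Definition Cadd (x y : C) : C := mkC (Re x + Re y) (Im x + Im y).
Definition Copp (x : C) : C := mkC (- Re x) (- Im x).
Definition Cmul (x y : C) : C :=
  mkC (Re x * Re y - Im x * Im y) (Re x * Im y + Im x * Re y).
Definition Cconj (x : C) : C := mkC (Re x) (- Im x).

(** * Operators on H = C^n, as matrices (only entries with indices < n matter) *)
Definition Mat := nat -> nat -> C.
Definition sumC (l : list nat) (f : nat -> C) : C :=
  fold_right (fun i acc => Cadd (f i) acc) C0 l.
Definition madd (A B : Mat) : Mat := fun i j => Cadd (A i j) (B i j).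
Definition msub (A B : Mat) : Mat := fun i j => Cadd (A i j) (Copp (B i j)).
Definition mscal (z : C) (A : Mat) : Mat := fun i j => Cmul z (A i j).
Definition mmul (n : nat) (A B : Mat) : Mat :=
  fun i j => sumC (seq 0 n) (fun k => Cmul (A i k) (B k j)).
Definition mone : Mat := fun i j => if Nat.eqb i j then C1 else C0.
Definition tr (n : nat) (A : Mat) : C := sumC (seq 0 n) (fun i => A i i).
Definition meq (n : nat) (A B : Mat) : Prop :=
  forall i j, (i < n)%nat -> (j < n)%nat -> A i j = B i j.

Definition Hermitian (n : nat) (A : Mat) : Prop :=
  forall i j, (i < n)%nat -> (j < n)%nat -> A j i = Cconj (A i j).

Definition bracket (n : nat) (a b : Mat) : Mat :=
  mscal (mkC 0 (- (1/2))) (msub (mmul n a b) (mmul n b a)).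
Definition jordan (n : nat) (a b : Mat) : Mat :=
  mscal (RtoC (1/2)) (madd (mmul n a b) (mmul n b a)).

(** O-dual identified with O via xi(a) = tr(xi~ a): a point of O-dual is a Hermitian
    matrix rho.  f_a(rho) = rho(a), U = {f_I <> 0}, e_a = f_a / f_I. *)
Definition f_ (n : nat) (a : Mat) (rho : Mat) : R := Re (tr n (mmul n rho a)).
Definition inU (n : nat) (rho : Mat) : Prop := f_ n mone rho <> 0.
Definition e_ (n : nat) (a : Mat) (rho : Mat) : R := f_ n a rho / f_ n mone rho.

Definition PSD (n : nat) (A : Mat) : Prop :=
  forall x : nat -> C,
    0 <= Re (sumC (seq 0 n) (fun i => sumC (seq 0 n)
                 (fun j => Cmul (Cconj (x i)) (Cmul (A i j) (x j))))).

Definition lin_indep_cols (n : nat) (A : Mat) (cols : list nat) : Prop :=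
  forall c : nat -> C,
    (forall i, (i < n)%nat -> sumC cols (fun j => Cmul (c j) (A i j)) = C0) ->
    forall j, In j cols -> c j = C0.
Definition valid_cols (n k : nat) (cols : list nat) : Prop :=
  NoDup cols /\ length cols = k /\ (forall j, In j cols -> (j < n)%nat).
Definition rank_eq (n : nat) (A : Mat) (k : nat) : Prop :=
  (exists cols, valid_cols n k cols /\ lin_indep_cols n A cols) /\
  (forall cols, valid_cols n (S k) cols -> ~ lin_indep_cols n A cols).

Definition density_rank (n k : nat) (rho : Mat) : Prop :=
  Hermitian n rho /\ PSD n rho /\ tr n rho = C1 /\ rank_eq n rho k.

(** Differentials: a cotangent vector at rho in O-dual is identified with a
    Hermitian c in O (the bidual of O), acting on tangent vectors eta by Re tr(c eta).
    [IsDiff n g rho c] : c is the differential of g : O-dual -> R at rho. *)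
Definition IsDiff (n : nat) (g : Mat -> R) (rho c : Mat) : Prop :=
  forall eta, Hermitian n eta ->
    derivable_pt_lim (fun t => g (madd rho (mscal (RtoC t) eta))) 0
                     (Re (tr n (mmul n c eta))).

(** Contravariant 2-tensor field: at each point, a map on pairs of covectors. *)
Definition Tensor2 := Mat -> Mat -> Mat -> R.

Definition bilinear_on_U (n : nat) (T : Tensor2) : Prop :=
  forall rho, Hermitian n rho -> inU n rho ->
  forall x y z r, Hermitian n x -> Hermitian n y -> Hermitian n z ->
    T rho (madd x (mscal (RtoC r) y)) z = T rho x z + r * T rho y z /\
    T rho z (madd x (mscal (RtoC r) y)) = T rho z x + r * T rho z y.

Definition tensor_on_U_with (n : nat) (T : Tensor2)
    (F : Mat -> Mat -> Mat -> R) : Prop :=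
  bilinear_on_U n T /\
  forall rho, Hermitian n rho -> inU n rho ->
  forall a b ca cb cI,
    Hermitian n a -> Hermitian n b ->
    Hermitian n ca -> Hermitian n cb -> Hermitian n cI ->
    IsDiff n (e_ n a) rho ca -> IsDiff n (e_ n b) rho cb ->
    IsDiff n (f_ n mone) rho cI ->
    T rho ca cb = F a b rho /\
    T rho cI cb = 0 /\ T rho ca cI = 0 /\ T rho cI cI = 0.

Definition is_Lambda_D (n : nat) (T : Tensor2) : Prop :=
  tensor_on_U_with n T (fun a b rho => e_ n (bracket n a b) rho).

Definition is_R_D (n : nat) (T : Tensor2) : Prop :=
  tensor_on_U_with n T
    (fun a b rho => e_ n (jordan n a b) rho - e_ n a rho * e_ n b rho).

(** The tangent vector (Hermitian v, acting on g by dg(v) = Re tr(dg v))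
    equals the value at rho of the vector field g |-> T(df, dg), where
    cf = df at rho. *)
Definition represents_field (n : nat) (T : Tensor2) (rho cf v : Mat) : Prop :=
  forall g cg, Hermitian n cg -> IsDiff n g rho cg ->
    T rho cf cg = Re (tr n (mmul n cg v)).

Definition TangentTo (n : nat) (S : Mat -> Prop) (rho v : Mat) : Prop :=
  exists eps, 0 < eps /\
  exists gamma : R -> Mat,
    meq n (gamma 0) rho /\
    (forall t, Rabs t < eps -> S (gamma t)) /\
    (forall i j, (i < n)%nat -> (j < n)%nat ->
       derivable_pt_lim (fun t => Re (gamma t i j)) 0 (Re (v i j)) /\
       derivable_pt_lim (fun t => Im (gamma t i j)) 0 (Im (v i j))).

(* Both vector fields are velocities of congruence curves. For a matrix [B],
   the curve [t |-> M_t rho M_t^* / tr (M_t rho M_t^* )] with [M_t = 1 + t B]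
   consists of Hermitian, positive semidefinite, unit-trace matrices, and of the
   rank of [rho] because [M_t] is invertible for small [t]; its velocity at
   [t = 0] is [B rho + rho B^* - tr (B rho + rho B^* ) rho]. The choices
   [B = i a / 2] and [B = a / 2] give the two stated operators.
   They are the values of [X_{e_a}] and [Y_{e_a}]: at a unit-trace [rho] the
   differential of [e_c] is that of [f_c] up to a multiple of [df_I], which both
   tensors annihilate, and [tr (rho [[a,c]])], [tr (rho (a . c))] are cyclic
   rearrangements of the pairings of [dc] with the two operators. *)

From Stdlib Require Import Reals List Lra Lia Psatz.
From Stdlib Require Import Classical ClassicalEpsilon FunctionalExtensionality.
Import ListNotations.
Open Scope R_scope.

Lemma C_eq (x y : C) : Re x = Re y -> Im x = Im y -> x = y.
Proof. destruct x, y; simpl; intros; subst; reflexivity. Qed.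

Ltac C_ring := apply C_eq; simpl; ring.

Definition Csub (x y : C) : C := Cadd x (Copp y).

Lemma C_ring_theory : ring_theory C0 C1 Cadd Cmul Csub Copp (@eq C).
Proof. constructor; intros; C_ring. Qed.
Add Ring C_ring : C_ring_theory.

Definition Cinv (x : C) : C :=
  mkC (Re x / (Re x * Re x + Im x * Im x)) (- Im x / (Re x * Re x + Im x * Im x)).
Definition Cdiv (x y : C) : C := Cmul x (Cinv y).

Lemma Cnorm2_neq0 (x : C) : x <> C0 -> Re x * Re x + Im x * Im x <> 0.
Proof.
  intros H E. apply H. destruct x as [a b]; simpl in *.
  assert (a = 0) by nra. assert (b = 0) by nra. subst. reflexivity.
Qed.

Lemma C_field_theory : field_theory C0 C1 Cadd Cmul Csub Copp Cdiv Cinv (@eq C).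
Proof.
  constructor.
  - exact C_ring_theory.
  - intro H. injection H. lra.
  - reflexivity.
  - intros x Hx. apply Cnorm2_neq0 in Hx. apply C_eq; simpl; field; auto.
Qed.
Add Field C_field : C_field_theory.

Lemma Cadd_eq0_r x y : Cadd x y = C0 -> y = Copp x.
Proof. intros H. transitivity (Csub (Cadd x y) x); [ring | rewrite H; ring]. Qed.

Lemma Cadd_eq0_l x y : Cadd x y = C0 -> x = Copp y.
Proof. intros H. transitivity (Csub (Cadd x y) y); [ring | rewrite H; ring]. Qed.

Lemma Cconj_add x y : Cconj (Cadd x y) = Cadd (Cconj x) (Cconj y).
Proof. C_ring. Qed.
Lemma Cconj_mul x y : Cconj (Cmul x y) = Cmul (Cconj x) (Cconj y).
Proof. C_ring. Qed.
Lemma Cconj_involutive x : Cconj (Cconj x) = x.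
Proof. C_ring. Qed.
Lemma Cconj_RtoC r : Cconj (RtoC r) = RtoC r.
Proof. C_ring. Qed.

Lemma sumC_cons a l f : sumC (a :: l) f = Cadd (f a) (sumC l f).
Proof. reflexivity. Qed.

Lemma sumC_ext l f g : (forall i, In i l -> f i = g i) -> sumC l f = sumC l g.
Proof.
  induction l as [|a l IH]; intros H; auto.
  rewrite !sumC_cons, H by now left. f_equal. apply IH. intros; apply H; now right.
Qed.

Lemma sumC_add l f g : sumC l (fun i => Cadd (f i) (g i)) = Cadd (sumC l f) (sumC l g).
Proof. induction l as [|a l IH]. C_ring. rewrite !sumC_cons, IH. ring. Qed.

Lemma sumC_mull l z f : sumC l (fun i => Cmul z (f i)) = Cmul z (sumC l f).
Proof. induction l as [|a l IH]. C_ring. rewrite !sumC_cons, IH. ring. Qed.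

Lemma sumC_mulr l z f : sumC l (fun i => Cmul (f i) z) = Cmul (sumC l f) z.
Proof. induction l as [|a l IH]. C_ring. rewrite !sumC_cons, IH. ring. Qed.

Lemma sumC_opp l f : sumC l (fun i => Copp (f i)) = Copp (sumC l f).
Proof. induction l as [|a l IH]. C_ring. rewrite !sumC_cons, IH. ring. Qed.

Lemma sumC_zero l f : (forall i, In i l -> f i = C0) -> sumC l f = C0.
Proof.
  intros H. rewrite (sumC_ext l f (fun i => Cmul C0 (f i))), sumC_mull. ring.
  intros i Hi. rewrite H by auto. ring.
Qed.

Lemma sumC_app l1 l2 f : sumC (l1 ++ l2) f = Cadd (sumC l1 f) (sumC l2 f).
Proof. induction l1 as [|a l1 IH]. simpl. C_ring. simpl. rewrite IH. ring. Qed.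

Lemma sumC_swap l1 l2 (f : nat -> nat -> C) :
  sumC l1 (fun i => sumC l2 (fun j => f i j)) = sumC l2 (fun j => sumC l1 (fun i => f i j)).
Proof.
  induction l1 as [|a l1 IH].
  - symmetry; apply sumC_zero; auto.
  - rewrite sumC_cons, IH, <- sumC_add. reflexivity.
Qed.

Lemma Cconj_sumC l f : Cconj (sumC l f) = sumC l (fun i => Cconj (f i)).
Proof. induction l as [|a l IH]. C_ring. rewrite !sumC_cons, <- IH. C_ring. Qed.

Lemma sumC_delta T j f : NoDup T -> In j T ->
  sumC T (fun s => if Nat.eqb s j then f s else C0) = f j.
Proof.
  induction T as [|a T IH]; intros Hnd Hin; [destruct Hin|].
  inversion Hnd; subst. rewrite sumC_cons. destruct (Nat.eqb_spec a j).
  - subst. rewrite sumC_zero. ring.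
    intros i Hi. destruct (Nat.eqb_spec i j); subst; tauto.
  - destruct Hin as [Hin|Hin]; [congruence|]. rewrite IH; auto. ring.
Qed.

Lemma sumC_seq_delta n i g : (i < n)%nat ->
  sumC (seq 0 n) (fun k => if Nat.eqb k i then g k else C0) = g i.
Proof. intros H. apply sumC_delta; [apply seq_NoDup | apply in_seq; lia]. Qed.

(** * Matrices *)

Definition ctr (A : Mat) : Mat := fun i j => Cconj (A j i).
Definition appv (n : nat) (A : Mat) (v : nat -> C) : nat -> C :=
  fun i => sumC (seq 0 n) (fun j => Cmul (A i j) (v j)).
Definition dot (n : nat) (u v : nat -> C) : C :=
  sumC (seq 0 n) (fun i => Cmul (Cconj (u i)) (v i)).

Ltac mat_ext := let i := fresh "i" in let j := fresh "j" in
  apply functional_extensionality; intro i; apply functional_extensionality; intro j.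

Lemma mmul_assoc n X Y Z : mmul n (mmul n X Y) Z = mmul n X (mmul n Y Z).
Proof.
  mat_ext. unfold mmul.
  transitivity (sumC (seq 0 n) (fun l => sumC (seq 0 n)
                  (fun k => Cmul (X i k) (Cmul (Y k l) (Z l j))))).
  - apply sumC_ext; intros l _. rewrite <- sumC_mulr. apply sumC_ext; intros; ring.
  - rewrite sumC_swap. apply sumC_ext; intros k _. apply sumC_mull.
Qed.

Lemma mmul_madd_l n X Y Z : mmul n (madd X Y) Z = madd (mmul n X Z) (mmul n Y Z).
Proof. mat_ext. unfold mmul, madd. rewrite <- sumC_add. apply sumC_ext; intros; ring. Qed.
Lemma mmul_madd_r n X Y Z : mmul n X (madd Y Z) = madd (mmul n X Y) (mmul n X Z).
Proof. mat_ext. unfold mmul, madd. rewrite <- sumC_add. apply sumC_ext; intros; ring. Qed.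
Lemma mmul_msub_r n X Y Z : mmul n X (msub Y Z) = msub (mmul n X Y) (mmul n X Z).
Proof.
  mat_ext. unfold mmul, msub. rewrite <- sumC_opp, <- sumC_add. apply sumC_ext; intros; ring.
Qed.
Lemma mmul_mscal_l n z X Y : mmul n (mscal z X) Y = mscal z (mmul n X Y).
Proof. mat_ext. unfold mmul, mscal. rewrite <- sumC_mull. apply sumC_ext; intros; ring. Qed.
Lemma mmul_mscal_r n z X Y : mmul n X (mscal z Y) = mscal z (mmul n X Y).
Proof. mat_ext. unfold mmul, mscal. rewrite <- sumC_mull. apply sumC_ext; intros; ring. Qed.

Lemma mmul_one_l n X i j : (i < n)%nat -> mmul n mone X i j = X i j.
Proof.
  intros H. unfold mmul, mone. rewrite <- (sumC_seq_delta n i (fun k => X k j)) by auto.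
  apply sumC_ext; intros k _. rewrite Nat.eqb_sym. destruct (Nat.eqb k i); C_ring.
Qed.
Lemma mmul_one_r n X i j : (j < n)%nat -> mmul n X mone i j = X i j.
Proof.
  intros H. unfold mmul, mone. rewrite <- (sumC_seq_delta n j (fun k => X i k)) by auto.
  apply sumC_ext; intros k _. destruct (Nat.eqb k j); C_ring.
Qed.

Lemma ctr_mmul n A B : ctr (mmul n A B) = mmul n (ctr B) (ctr A).
Proof.
  mat_ext. unfold ctr, mmul. rewrite Cconj_sumC. apply sumC_ext; intros.
  rewrite Cconj_mul. ring.
Qed.
Lemma ctr_ctr A : ctr (ctr A) = A.
Proof. mat_ext. apply Cconj_involutive. Qed.
Lemma ctr_madd A B : ctr (madd A B) = madd (ctr A) (ctr B).
Proof. mat_ext. apply Cconj_add. Qed.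
Lemma ctr_mscal_RtoC r A : ctr (mscal (RtoC r) A) = mscal (RtoC r) (ctr A).
Proof. mat_ext. unfold ctr, mscal. rewrite Cconj_mul, Cconj_RtoC. reflexivity. Qed.
Lemma ctr_mone : ctr mone = mone.
Proof.
  mat_ext. unfold ctr, mone. rewrite Nat.eqb_sym. destruct (Nat.eqb i j); C_ring.
Qed.

Lemma mone_hermitian n : Hermitian n mone.
Proof. intros i j _ _. exact (f_equal (fun M => M j i) (eq_sym ctr_mone)). Qed.

Lemma hermitian_ctr n A : Hermitian n A <-> meq n (ctr A) A.
Proof.
  split; intros H i j Hi Hj; unfold ctr in *.
  - rewrite H by auto. apply Cconj_involutive.
  - rewrite <- (H j i) by auto. reflexivity.
Qed.

Lemma hermitian_meq n A B : meq n A B -> Hermitian n B -> Hermitian n A.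
Proof. intros E HB i j Hi Hj. rewrite !E by auto. auto. Qed.

Lemma mmul_meq_l n A A' B : meq n A A' -> meq n (mmul n A B) (mmul n A' B).
Proof.
  intros H i j Hi Hj. apply sumC_ext. intros k Hk. apply in_seq in Hk. rewrite H by lia. auto.
Qed.
Lemma mmul_meq_r n A B B' : meq n B B' -> meq n (mmul n A B) (mmul n A B').
Proof.
  intros H i j Hi Hj. apply sumC_ext. intros k Hk. apply in_seq in Hk. rewrite H by lia. auto.
Qed.

Lemma mmul_ctr_hermitian_conj n rho B i j : Hermitian n rho -> (i < n)%nat -> (j < n)%nat ->
  mmul n rho (ctr B) i j = Cconj (mmul n B rho j i).
Proof.
  intros Hh Hi Hj. unfold mmul, ctr. rewrite Cconj_sumC. apply sumC_ext. intros l Hl.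
  apply in_seq in Hl. rewrite Cconj_mul, <- (Hh l i) by lia. ring.
Qed.

Lemma tr_meq n A B : meq n A B -> tr n A = tr n B.
Proof. intros H. apply sumC_ext. intros k Hk. apply in_seq in Hk. apply H; lia. Qed.
Lemma tr_madd n A B : tr n (madd A B) = Cadd (tr n A) (tr n B).
Proof. apply sumC_add. Qed.
Lemma tr_msub n A B : tr n (msub A B) = Csub (tr n A) (tr n B).
Proof. unfold tr, msub, Csub. rewrite sumC_add, sumC_opp. reflexivity. Qed.
Lemma tr_mscal n z A : tr n (mscal z A) = Cmul z (tr n A).
Proof. apply sumC_mull. Qed.
Lemma tr_mmulC n A B : tr n (mmul n A B) = tr n (mmul n B A).
Proof.
  unfold tr, mmul. rewrite sumC_swap. apply sumC_ext; intros; apply sumC_ext; intros; ring.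
Qed.
Lemma tr_mmul_one n A : tr n (mmul n A mone) = tr n A.
Proof. apply tr_meq. intros i j Hi Hj. apply mmul_one_r; auto. Qed.
Lemma tr_one_mmul n A : tr n (mmul n mone A) = tr n A.
Proof. apply tr_meq. intros i j Hi Hj. apply mmul_one_l; auto. Qed.

Lemma tr_hermitian_real n A : Hermitian n A -> Im (tr n A) = 0.
Proof.
  intros H.
  assert (E : Cconj (tr n A) = tr n A).
  { unfold tr. rewrite Cconj_sumC. apply sumC_ext. intros i Hi. apply in_seq in Hi.
    rewrite <- H by lia. reflexivity. }
  apply (f_equal Im) in E. simpl in E. lra.
Qed.

Lemma tr_hermitian_mmul_real n A B :
  Hermitian n A -> Hermitian n B -> Im (tr n (mmul n A B)) = 0.
Proof.
  intros HA HB.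
  assert (E : Cconj (tr n (mmul n A B)) = tr n (mmul n A B)).
  { unfold tr, mmul. rewrite Cconj_sumC, sumC_swap.
    apply sumC_ext; intros i Hi; rewrite Cconj_sumC; apply sumC_ext; intros j Hj.
    apply in_seq in Hi; apply in_seq in Hj. rewrite Cconj_mul, <- HA, <- HB by lia. ring. }
  apply (f_equal Im) in E. simpl in E. lra.
Qed.

Lemma appv_mmul n A B v : appv n (mmul n A B) v = appv n A (appv n B v).
Proof.
  apply functional_extensionality; intro i. unfold appv, mmul.
  transitivity (sumC (seq 0 n) (fun j => sumC (seq 0 n)
                  (fun k => Cmul (A i k) (Cmul (B k j) (v j))))).
  - apply sumC_ext; intros. rewrite <- sumC_mulr. apply sumC_ext; intros; ring.
  - rewrite sumC_swap. apply sumC_ext; intros. apply sumC_mull.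
Qed.

Lemma dot_appv_adjoint n u A v : dot n u (appv n A v) = dot n (appv n (ctr A) u) v.
Proof.
  unfold dot, appv, ctr.
  transitivity (sumC (seq 0 n) (fun i => sumC (seq 0 n)
                  (fun j => Cmul (Cconj (u i)) (Cmul (A i j) (v j))))).
  - apply sumC_ext; intros. rewrite sumC_mull. reflexivity.
  - rewrite sumC_swap. apply sumC_ext; intros. rewrite Cconj_sumC, <- sumC_mulr.
    apply sumC_ext; intros. rewrite Cconj_mul, Cconj_involutive. ring.
Qed.

Lemma dot_appv_mscal_RtoC n r A x :
  dot n x (appv n (mscal (RtoC r) A) x) = Cmul (RtoC r) (dot n x (appv n A x)).
Proof.
  unfold dot, appv, mscal. rewrite <- sumC_mull. apply sumC_ext; intros.
  rewrite (sumC_ext _ _ (fun j => Cmul (RtoC r) (Cmul (A i j) (x j)))) by (intros; ring).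
  rewrite sumC_mull. ring.
Qed.

Lemma PSD_dot n A : PSD n A <-> forall x, 0 <= Re (dot n x (appv n A x)).
Proof.
  assert (E : forall x, sumC (seq 0 n) (fun i => sumC (seq 0 n)
            (fun j => Cmul (Cconj (x i)) (Cmul (A i j) (x j)))) = dot n x (appv n A x)).
  { intros x. apply sumC_ext; intros. apply sumC_mull. }
  unfold PSD. split; intros H x; [rewrite <- E | rewrite E]; apply H.
Qed.

(** * Linear independence and rank *)

Definition comb (l : list nat) (c : nat -> C) (w : nat -> nat -> C) : nat -> C :=
  fun i => sumC l (fun s => Cmul (c s) (w s i)).
Definition indep (n : nat) (l : list nat) (w : nat -> nat -> C) : Prop :=
  forall c, (forall i, (i < n)%nat -> comb l c w i = C0) -> forall s, In s l -> c s = C0.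
Definition in_span (n : nat) (l : list nat) (w : nat -> nat -> C) (u : nat -> C) : Prop :=
  exists d, forall i, (i < n)%nat -> u i = comb l d w i.

(* A family of vectors is a map [w] from labels to vectors, restricted to a list
   of labels; [lin_indep_cols n A l] is, by definition, [indep n l (cols A)]. *)
Definition cols (A : Mat) : nat -> nat -> C := fun j i => A i j.

Lemma not_indep_witness n l w : ~ indep n l w ->
  exists c, (forall i, (i < n)%nat -> comb l c w i = C0) /\ exists s, In s l /\ c s <> C0.
Proof.
  intros H. apply not_all_ex_not in H as [c Hc]. apply imply_to_and in Hc as [H0 Hc].
  apply not_all_ex_not in Hc as [s Hs]. apply imply_to_and in Hs.
  exists c; split; auto. exists s; tauto.
Qed.

Lemma in_span_choice n (S T : list nat) v w : (forall s, In s S -> in_span n T v (w s)) ->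
  exists D, forall s, In s S -> forall i, (i < n)%nat -> w s i = comb T (D s) v i.
Proof.
  intros H. apply (choice (fun (s : nat) (d : nat -> C) =>
                             In s S -> forall i, (i < n)%nat -> w s i = comb T d v i)).
  intros s. destruct (classic (In s S)) as [Hs|Hs].
  - destruct (H s Hs) as [d Hd]. exists d; auto.
  - exists (fun _ => C0). tauto.
Qed.

Lemma in_span_ext n T w u u' :
  (forall i, (i < n)%nat -> u i = u' i) -> in_span n T w u' -> in_span n T w u.
Proof. intros H [d Hd]. exists d. intros i Hi. rewrite H; auto. Qed.

Lemma in_span_member n T w j : NoDup T -> In j T -> in_span n T w (w j).
Proof.
  intros Hnd Hin. exists (fun s => if Nat.eqb s j then C1 else C0). intros i Hi.
  transitivity (sumC T (fun s => if Nat.eqb s j then w s i else C0)).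
  - symmetry. apply (sumC_delta T j (fun s => w s i)); auto.
  - unfold comb. apply sumC_ext. intros s _. destruct (Nat.eqb s j); ring.
Qed.

Lemma in_span_cons n T w u m : ~ In m T -> in_span n T w u -> in_span n (m :: T) w u.
Proof.
  intros Hm [d Hd]. exists (fun s => if Nat.eqb s m then C0 else d s). intros i Hi.
  rewrite Hd by auto. unfold comb. rewrite sumC_cons, Nat.eqb_refl.
  rewrite (sumC_ext T (fun s => Cmul (if Nat.eqb s m then C0 else d s) (w s i))
                      (fun s => Cmul (d s) (w s i))).
  - ring.
  - intros s Hs. destruct (Nat.eqb_spec s m); subst; tauto.
Qed.

Lemma in_span_comb n S T v u c :
  (forall s, In s S -> in_span n T v (u s)) -> in_span n T v (comb S c u).
Proof.
  intros H. destruct (in_span_choice n S T v u H) as [D HD].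
  exists (fun l => sumC S (fun s => Cmul (c s) (D s l))). intros i Hi. unfold comb.
  rewrite (sumC_ext S _ (fun s => sumC T (fun l => Cmul (c s) (Cmul (D s l) (v l i))))).
  - rewrite sumC_swap. apply sumC_ext; intros l _. rewrite <- sumC_mulr.
    apply sumC_ext; intros; ring.
  - intros s Hs. rewrite (HD s Hs i Hi). apply eq_sym, sumC_mull.
Qed.

Lemma in_span_of_dependent_cons n T w j :
  indep n T w -> ~ indep n (j :: T) w -> in_span n T w (w j).
Proof.
  intros HT Hn. apply not_indep_witness in Hn as [c [H0 [s [Hs Hcs]]]].
  destruct (classic (c j = C0)) as [Hj | Hj].
  - exfalso. destruct Hs as [<- | Hs]; [auto|]. apply Hcs, (HT c); auto.
    intros i Hi. specialize (H0 i Hi). unfold comb in *. rewrite sumC_cons, Hj in H0.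
    rewrite <- H0. ring.
  - exists (fun s => Cmul (Copp (Cinv (c j))) (c s)). intros i Hi.
    specialize (H0 i Hi). unfold comb in *. rewrite sumC_cons in H0.
    rewrite (sumC_ext _ _ (fun s => Cmul (Copp (Cinv (c j))) (Cmul (c s) (w s i))))
      by (intros; ring).
    rewrite sumC_mull.
    rewrite (Cadd_eq0_r _ _ H0). field. auto.
Qed.

Lemma exists_maximal_indep n w m : exists T, NoDup T /\ (forall j, In j T -> (j < m)%nat) /\
  indep n T w /\ forall j, (j < m)%nat -> in_span n T w (w j).
Proof.
  induction m as [|m (T & Hnd & Hlt & Hind & Hsp)].
  - exists []. repeat split; [constructor | intros j [] | intros c _ s [] | intros; lia].
  - assert (HmT : ~ In m T) by (intro H; specialize (Hlt m H); lia).
    destruct (classic (indep n (m :: T) w)) as [Hi | Hi].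
    + exists (m :: T). repeat split; auto.
      * constructor; auto.
      * intros j [<-|Hj]; [lia | specialize (Hlt j Hj); lia].
      * intros j Hj. destruct (Nat.eq_dec j m) as [->|].
        -- apply in_span_member; [constructor; auto | now left].
        -- apply in_span_cons; auto. apply Hsp. lia.
    + exists T. repeat split; auto.
      * intros j Hj; specialize (Hlt j Hj); lia.
      * intros j Hj. destruct (Nat.eq_dec j m) as [->|].
        -- apply in_span_of_dependent_cons; auto.
        -- apply Hsp. lia.
Qed.

(* One step of Gaussian elimination. *)
Lemma in_span_eliminate n l0 T v x y dx dy :
  (forall i, (i < n)%nat -> x i = comb (l0 :: T) dx v i) ->
  (forall i, (i < n)%nat -> y i = comb (l0 :: T) dy v i) -> dy l0 <> C0 ->
  in_span n T v (fun i => Csub (x i) (Cmul (Cdiv (dx l0) (dy l0)) (y i))).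
Proof.
  intros Hx Hy Hd. exists (fun l => Csub (dx l) (Cmul (Cdiv (dx l0) (dy l0)) (dy l))).
  intros i Hi. rewrite Hx, Hy by auto. unfold comb. rewrite !sumC_cons.
  rewrite (sumC_ext T (fun l => Cmul (Csub (dx l) (Cmul (Cdiv (dx l0) (dy l0)) (dy l))) (v l i))
             (fun l => Cadd (Cmul (dx l) (v l i))
             (Cmul (Copp (Cdiv (dx l0) (dy l0))) (Cmul (dy l) (v l i)))))
    by (intros; unfold Csub; ring).
  rewrite sumC_add, sumC_mull. field. auto.
Qed.

Lemma indep_eliminate n l1 s0 l2 w r :
  NoDup (l1 ++ s0 :: l2) -> indep n (l1 ++ s0 :: l2) w ->
  indep n (l1 ++ l2) (fun s i => Csub (w s i) (Cmul (r s) (w s0 i))).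
Proof.
  intros Hnd Hind c Hc s Hs.
  assert (Hs0 : ~ In s0 (l1 ++ l2)) by (apply NoDup_remove_2 in Hnd; auto).
  set (cc := fun s => if Nat.eqb s s0 then Copp (sumC (l1 ++ l2) (fun s => Cmul (c s) (r s)))
                      else c s).
  assert (Hcc : forall s, In s (l1 ++ l2) -> cc s = c s).
  { intros s1 Hs1. unfold cc. destruct (Nat.eqb_spec s1 s0); subst; tauto. }
  rewrite <- (Hcc s Hs). apply (Hind cc).
  - intros i Hi. specialize (Hc i Hi). unfold comb in *.
    replace (sumC (l1 ++ s0 :: l2) (fun s => Cmul (cc s) (w s i)))
      with (Cadd (Cmul (cc s0) (w s0 i)) (sumC (l1 ++ l2) (fun s => Cmul (cc s) (w s i))))
      by (rewrite !sumC_app, sumC_cons; ring).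
    rewrite (sumC_ext _ (fun s => Cmul (cc s) (w s i)) (fun s => Cmul (c s) (w s i)))
      by (intros s1 Hs1; rewrite Hcc; auto).
    rewrite (sumC_ext _ _ (fun s => Cadd (Cmul (c s) (w s i))
               (Cmul (Copp (w s0 i)) (Cmul (c s) (r s))))) in Hc by (intros; unfold Csub; ring).
    rewrite sumC_add, sumC_mull in Hc. unfold cc at 1. rewrite Nat.eqb_refl, <- Hc. ring.
  - apply in_or_app. apply in_app_or in Hs. simpl. tauto.
Qed.

Lemma steinitz_exchange n : forall T v S w, NoDup S -> (forall s, In s S -> in_span n T v (w s)) ->
  (length T < length S)%nat -> ~ indep n S w.
Proof.
  induction T as [|l0 T IH]; intros v S w Hnd Hsp Hlen Hind.
  - destruct S as [|s0 S]; [simpl in Hlen; lia|].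
    assert (C1 = C0) as E; [|injection E; lra].
    eapply (Hind (fun _ => C1)); [|now left].
    intros i Hi. apply sumC_zero. intros s Hs.
    destruct (Hsp s Hs) as [d Hd]. rewrite Hd by auto. unfold comb. simpl. ring.
  - destruct (in_span_choice n S (l0 :: T) v w Hsp) as [D HD].
    destruct (classic (exists s0, In s0 S /\ D s0 l0 <> C0)) as [[s0 [Hs0 Hd0]] | Hno].
    + apply in_split in Hs0 as (l1 & l2 & ->).
      apply (IH v (l1 ++ l2) (fun s i => Csub (w s i) (Cmul (Cdiv (D s l0) (D s0 l0)) (w s0 i)))).
      * eapply NoDup_remove_1; eauto.
      * intros s Hs. apply in_span_eliminate; auto; apply HD.
        -- apply in_or_app. apply in_app_or in Hs. simpl. tauto.
        -- apply in_elt.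
      * rewrite !length_app in *. simpl in *. lia.
      * apply indep_eliminate; auto.
    + apply (IH v S w); auto; [|simpl in Hlen; lia].
      intros s Hs. exists (D s). intros i Hi. rewrite (HD s Hs i Hi). unfold comb.
      rewrite sumC_cons.
      assert (D s l0 = C0) as -> by (apply NNPP; intro; apply Hno; eauto).
      ring.
Qed.

Lemma NoDup_app_disjoint (l1 l2 : list nat) x : NoDup (l1 ++ l2) -> In x l1 -> ~ In x l2.
Proof.
  intros Hnd H1 H2. apply in_split in H2 as (a & b & ->).
  rewrite app_assoc in Hnd. apply NoDup_remove_2 in Hnd. apply Hnd.
  rewrite <- app_assoc. apply in_or_app. now left.
Qed.

Lemma indep_firstn n T w k : NoDup T -> indep n T w -> indep n (firstn k T) w.
Proof.
  intros Hnd Hi c Hc s Hs.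
  rewrite <- (firstn_skipn k T) in Hnd.
  set (c' := fun s => if in_dec Nat.eq_dec s (firstn k T) then c s else C0).
  assert (Hc' : c' s = C0).
  { apply (Hi c'); [| rewrite <- (firstn_skipn k T); apply in_or_app; auto].
    intros i Hin. unfold comb. rewrite <- (firstn_skipn k T) at 1. rewrite sumC_app.
    rewrite (sumC_zero (skipn k T)).
    - specialize (Hc i Hin). unfold comb in Hc.
      rewrite (sumC_ext _ (fun s => Cmul (c' s) (w s i)) (fun s => Cmul (c s) (w s i))), Hc.
      + ring.
      + intros s1 Hs1. unfold c'. destruct (in_dec Nat.eq_dec s1 (firstn k T)); tauto.
    - intros s1 Hs1. unfold c'. destruct (in_dec Nat.eq_dec s1 (firstn k T)) as [Hf|]; [|ring].
      exfalso. apply (NoDup_app_disjoint _ _ _ Hnd Hf Hs1). }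
  unfold c' in Hc'. destruct (in_dec Nat.eq_dec s (firstn k T)); tauto.
Qed.

Definition injv (n : nat) (M : Mat) : Prop :=
  forall v, (forall i, (i < n)%nat -> appv n M v i = C0) -> forall i, (i < n)%nat -> v i = C0.

Definition nrm (z : C) : R := Rabs (Re z) + Rabs (Im z).
Definition Rsum (l : list nat) (g : nat -> R) : R := fold_right (fun i acc => g i + acc) 0 l.

Lemma nrm_nonneg z : 0 <= nrm z.
Proof. unfold nrm. pose proof (Rabs_pos (Re z)); pose proof (Rabs_pos (Im z)); lra. Qed.

Lemma nrm_mul x y : nrm (Cmul x y) <= nrm x * nrm y.
Proof.
  unfold nrm; destruct x as [a b], y as [c d]; simpl.
  pose proof (Rabs_triang (a * c) (- (b * d))) as H1. pose proof (Rabs_triang (a * d) (b * c)).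
  rewrite Rabs_Ropp in H1. rewrite !Rabs_mult in *.
  pose proof (Rabs_pos a); pose proof (Rabs_pos b).
  pose proof (Rabs_pos c); pose proof (Rabs_pos d).
  unfold Rminus. nra.
Qed.

Lemma nrm_add x y : nrm (Cadd x y) <= nrm x + nrm y.
Proof.
  unfold nrm; simpl.
  pose proof (Rabs_triang (Re x) (Re y)). pose proof (Rabs_triang (Im x) (Im y)). lra.
Qed.

Lemma nrm_sumC l f : nrm (sumC l f) <= Rsum l (fun i => nrm (f i)).
Proof.
  induction l as [|a l IH]; simpl.
  - unfold nrm; simpl; rewrite Rabs_R0; lra.
  - pose proof (nrm_add (f a) (sumC l f)). lra.
Qed.

Lemma nrm_eq0 z : nrm z = 0 -> z = C0.
Proof.
  unfold nrm; intros H. pose proof (Rabs_pos (Re z)); pose proof (Rabs_pos (Im z)).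
  apply C_eq; simpl; apply NNPP; intro E; apply Rabs_pos_lt in E; lra.
Qed.

Lemma nrm_RtoC_mul t z : nrm (Cmul (RtoC t) z) = Rabs t * nrm z.
Proof.
  unfold nrm; simpl.
  replace (t * Re z - 0 * Im z) with (t * Re z) by ring.
  replace (t * Im z + 0 * Re z) with (t * Im z) by ring. rewrite !Rabs_mult. ring.
Qed.

Lemma Rsum_le l g h : (forall i, In i l -> g i <= h i) -> Rsum l g <= Rsum l h.
Proof.
  induction l as [|a l IH]; simpl; intros H; [lra|].
  pose proof (H a (or_introl eq_refl)). pose proof (IH (fun i Hi => H i (or_intror Hi))). lra.
Qed.

Lemma Rsum_nonneg l g : (forall i, In i l -> 0 <= g i) -> 0 <= Rsum l g.
Proof.
  induction l as [|a l IH]; simpl; intros H; [lra|].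
  pose proof (H a (or_introl eq_refl)). pose proof (IH (fun i Hi => H i (or_intror Hi))). lra.
Qed.

Lemma Rsum_ge_elt l g i : (forall j, In j l -> 0 <= g j) -> In i l -> g i <= Rsum l g.
Proof.
  induction l as [|a l IH]; simpl; intros H Hi; [destruct Hi|].
  pose proof (Rsum_nonneg l g (fun j Hj => H j (or_intror Hj))).
  pose proof (H a (or_introl eq_refl)).
  destruct Hi as [<-|Hi]; [lra|]. pose proof (IH (fun j Hj => H j (or_intror Hj)) Hi). lra.
Qed.

Lemma Rsum_scal l c g : Rsum l (fun i => c * g i) = c * Rsum l g.
Proof. induction l as [|a l IH]; simpl; [|rewrite IH]; ring. Qed.

Lemma Rsum_const l c : Rsum l (fun _ => c) = INR (length l) * c.
Proof.
  induction l as [|a l IH]; simpl length; [simpl; ring|].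
  rewrite S_INR. simpl. rewrite IH. ring.
Qed.

Section PerturbedIdentity.
Variables (n : nat) (B : Mat).

Let K := Rsum (seq 0 n) (fun i => Rsum (seq 0 n) (fun j => nrm (B i j))).

Lemma K_nonneg : 0 <= K.
Proof. apply Rsum_nonneg; intros; apply Rsum_nonneg; intros; apply nrm_nonneg. Qed.

Lemma appv_perturbed_identity t v i : (i < n)%nat ->
  appv n (madd mone (mscal (RtoC t) B)) v i = Cadd (v i) (Cmul (RtoC t) (appv n B v i)).
Proof.
  intros Hi. unfold appv, madd, mscal.
  rewrite (sumC_ext _ _ (fun j => Cadd (if Nat.eqb j i then v j else C0)
                                      (Cmul (RtoC t) (Cmul (B i j) (v j))))).
  - rewrite sumC_add, sumC_mull, (sumC_seq_delta n i v); auto.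
  - intros j _. unfold mone. rewrite Nat.eqb_sym. destruct (Nat.eqb j i); C_ring.
Qed.

Lemma perturbed_identity_kernel_bound t v i :
  (forall i, (i < n)%nat -> appv n (madd mone (mscal (RtoC t) B)) v i = C0) -> (i < n)%nat ->
  nrm (v i) <= Rabs t * (K * Rsum (seq 0 n) (fun j => nrm (v j))).
Proof.
  intros Hv Hi. specialize (Hv i Hi). rewrite appv_perturbed_identity in Hv by auto.
  replace (v i) with (Cmul (RtoC (- t)) (appv n B v i))
    by (rewrite (Cadd_eq0_l _ _ Hv); C_ring).
  rewrite nrm_RtoC_mul, Rabs_Ropp. apply Rmult_le_compat_l; [apply Rabs_pos|].
  unfold appv. eapply Rle_trans; [apply nrm_sumC|].
  eapply Rle_trans; [apply Rsum_le; intros j _; apply nrm_mul|].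
  rewrite <- Rsum_scal. apply Rsum_le. intros j Hj. apply Rmult_le_compat_r; [apply nrm_nonneg|].
  eapply Rle_trans; [|apply (Rsum_ge_elt _ (fun i => Rsum (seq 0 n) (fun j => nrm (B i j))) i)].
  - apply (Rsum_ge_elt _ (fun j => nrm (B i j))); auto. intros; apply nrm_nonneg.
  - intros; apply Rsum_nonneg; intros; apply nrm_nonneg.
  - apply in_seq; lia.
Qed.

(* For [|t| < 1 / (n K + 1)] the bound above forces [sum_j |v j| = 0]. *)
Lemma perturbed_identity_injective :
  exists d, 0 < d /\ forall t, Rabs t < d -> injv n (madd mone (mscal (RtoC t) B)).
Proof.
  pose proof K_nonneg. pose proof (pos_INR n).
  exists (/ (INR n * K + 1)). split; [apply Rinv_0_lt_compat; nra|].
  intros t Ht v Hv.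
  set (W := Rsum (seq 0 n) (fun i => nrm (v i))).
  assert (HW0 : 0 <= W) by (apply Rsum_nonneg; intros; apply nrm_nonneg).
  assert (HWle : W <= INR n * (Rabs t * (K * W))).
  { unfold W at 1. eapply Rle_trans.
    - apply Rsum_le. intros i Hi. apply in_seq in Hi.
      apply perturbed_identity_kernel_bound; auto. lia.
    - rewrite Rsum_const, length_seq. apply Rle_refl. }
  assert (Hsmall : Rabs t * (INR n * K) < 1).
  { pose proof (Rabs_pos t).
    apply (Rmult_lt_compat_r (INR n * K + 1)) in Ht; [|nra].
    rewrite Rinv_l in Ht; nra. }
  assert (HW : W = 0) by (pose proof (Rabs_pos t); nra).
  intros i Hi. apply nrm_eq0, Rle_antisym; [|apply nrm_nonneg].
  rewrite <- HW. apply (Rsum_ge_elt _ (fun i => nrm (v i))).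
  - intros; apply nrm_nonneg.
  - apply in_seq; lia.
Qed.

End PerturbedIdentity.

Lemma in_span_unit_vectors n u : in_span n (seq 0 n) (fun l i => mone i l) u.
Proof.
  exists u. intros i Hi. unfold comb. rewrite <- (sumC_seq_delta n i u) at 1 by auto.
  apply sumC_ext. intros k _. unfold mone. rewrite (Nat.eqb_sym i k). destruct (Nat.eqb k i); ring.
Qed.

(* The [n + 1] vectors formed by the columns of [A] and a unit vector [e_j]
   are dependent by [steinitz_exchange]; injectivity forces the coefficient of
   [e_j] to be nonzero, which solves [A x = e_j]. *)
Lemma right_inverse_of_injective n A : injv n A -> exists N, meq n (mmul n A N) mone.
Proof.
  intros Hinj.
  destruct (choice (fun (j : nat) (x : nat -> C) =>
              (j < n)%nat -> forall i, (i < n)%nat -> appv n A x i = mone i j)) as [X HX].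
  - intros j. destruct (classic (j < n)%nat) as [Hj|Hj]; [|exists (fun _ => C0); tauto].
    set (w := fun s => if Nat.ltb s n then cols A s else (fun i => mone i j)).
    assert (Hdep : ~ indep n (seq 0 (S n)) w).
    { apply (steinitz_exchange n (seq 0 n) (fun l i => mone i l)).
      - apply seq_NoDup.
      - intros; apply in_span_unit_vectors.
      - rewrite !length_seq. lia. }
    apply not_indep_witness in Hdep as [c [Hc [s [Hs Hcs]]]].
    assert (Hc' : forall i, (i < n)%nat -> Cadd (Cmul (c n) (mone i j)) (appv n A c i) = C0).
    { intros i Hi. rewrite <- (Hc i Hi). unfold comb. rewrite seq_S, sumC_app. simpl.
      unfold w at 2. rewrite Nat.ltb_irrefl.
      replace (appv n A c i) with (sumC (seq 0 n) (fun s => Cmul (c s) (w s i))); [ring|].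
      apply sumC_ext. intros l Hl. apply in_seq in Hl. unfold w.
      replace (Nat.ltb l n) with true by (symmetry; apply Nat.ltb_lt; lia). unfold cols. ring. }
    destruct (classic (c n = C0)) as [Hcn|Hcn].
    + exfalso. apply Hcs. apply in_seq in Hs. destruct (Nat.eq_dec s n) as [->|]; auto.
      apply (Hinj c); [|lia]. intros i Hi. rewrite <- (Hc' i Hi), Hcn. ring.
    + exists (fun s => Cmul (Copp (Cinv (c n))) (c s)). intros _ i Hi.
      unfold appv. rewrite (sumC_ext _ _ (fun s => Cmul (Copp (Cinv (c n))) (Cmul (A i s) (c s))))
        by (intros; ring).
      rewrite sumC_mull. unfold appv in Hc'. rewrite (Cadd_eq0_r _ _ (Hc' i Hi)). field. auto.
  - exists (fun l j => X j l). intros i j Hi Hj. rewrite <- (HX j Hj i Hi). reflexivity.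
Qed.

Lemma comb_cols_mmul n M Z S c i :
  comb S c (cols (mmul n M Z)) i = appv n M (comb S c (cols Z)) i.
Proof.
  unfold comb, cols, appv, mmul.
  rewrite (sumC_ext S _ (fun s => sumC (seq 0 n) (fun l => Cmul (M i l) (Cmul (c s) (Z l s))))).
  - rewrite sumC_swap. apply sumC_ext; intros. rewrite sumC_mull. reflexivity.
  - intros. rewrite <- sumC_mull. apply sumC_ext; intros; ring.
Qed.

Lemma indep_cols_mmul_injv n M Z S :
  injv n M -> indep n S (cols Z) -> indep n S (cols (mmul n M Z)).
Proof. intros HM HZ c Hc. apply HZ, HM. intros i Hi. rewrite <- comb_cols_mmul. auto. Qed.

Lemma indep_cols_of_mmul n M Z S : indep n S (cols (mmul n M Z)) -> indep n S (cols Z).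
Proof.
  intros H c Hc. apply H. intros i Hi. rewrite comb_cols_mmul. apply sumC_zero.
  intros l Hl. apply in_seq in Hl. rewrite Hc by lia. ring.
Qed.

Lemma in_span_cols_mmul n X Y T s :
  (forall l, (l < n)%nat -> in_span n T (cols X) (cols X l)) ->
  in_span n T (cols X) (cols (mmul n X Y) s).
Proof.
  intros H. apply (in_span_ext n T (cols X) _ (comb (seq 0 n) (fun l => Y l s) (cols X))).
  - intros i Hi. unfold cols, mmul, comb. apply sumC_ext; intros; ring.
  - apply in_span_comb. intros l Hl. apply in_seq in Hl. apply H. lia.
Qed.

Lemma rank_eq_basis n A k : rank_eq n A k ->
  exists T, valid_cols n k T /\ indep n T (cols A) /\
            forall j, (j < n)%nat -> in_span n T (cols A) (cols A j).
Proof.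
  intros [[T [[Hnd [Hlen Hlt]] Hind]] Hmax]. exists T. split; [repeat split; auto|split; auto].
  intros j Hj. destruct (In_dec Nat.eq_dec j T) as [Hin|Hin].
  - apply in_span_member; auto.
  - apply in_span_of_dependent_cons; auto. intro Hi. apply (Hmax (j :: T)); auto.
    repeat split; [constructor; auto | simpl; lia | intros j0 [<-|E]; auto].
Qed.

(* The columns of [Z = A N1] lie in the span of those of [A] and conversely,
   since [Z N2 = A]; so [Z] has the rank of [A], and so does [M Z] for
   injective [M]. *)
Lemma rank_eq_mmul n k A M N1 N2 : rank_eq n A k -> injv n M ->
  meq n (mmul n (mmul n A N1) N2) A -> rank_eq n (mmul n M (mmul n A N1)) k.
Proof.
  intros HA HM HZ. set (Z := mmul n A N1).
  destruct (rank_eq_basis n A k HA) as (T0 & [Hnd0 [Hlen0 Hlt0]] & Hind0 & HspA).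
  assert (HspZ : forall s, (s < n)%nat -> in_span n T0 (cols A) (cols Z s))
    by (intros; apply in_span_cols_mmul; auto).
  split.
  - destruct (exists_maximal_indep n (cols Z) n) as (T & Hnd & Hlt & Hind & Hsp).
    assert (Hk : (k <= length T)%nat).
    { apply Nat.nlt_ge. intro Hlt'.
      apply (steinitz_exchange n T (cols Z) T0 (cols A)); auto; [|lia].
      intros s Hs. apply (in_span_ext n T (cols Z) _ (cols (mmul n Z N2) s)).
      - intros i Hi. symmetry. apply HZ; auto.
      - apply in_span_cols_mmul. auto. }
    exists (firstn k T). split.
    + repeat split.
      * rewrite <- (firstn_skipn k T) in Hnd. eapply NoDup_app_remove_r; eauto.
      * apply firstn_length_le; auto.
      * intros j Hj. apply Hlt. rewrite <- (firstn_skipn k T). apply in_or_app; auto.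
    + apply indep_cols_mmul_injv, indep_firstn; auto.
  - intros S [HndS [HlenS HltS]] HiS. apply indep_cols_of_mmul in HiS.
    apply (steinitz_exchange n T0 (cols A) S (cols Z)); auto. lia.
Qed.

(** * Tangent curves *)

Lemma derivable_pt_lim_quadratic p0 p1 p2 :
  derivable_pt_lim (fun t => p0 + t * p1 + t * t * p2) 0 p1.
Proof.
  pose proof (derivable_pt_lim_plus _ _ 0 _ _
    (derivable_pt_lim_plus _ _ 0 _ _ (derivable_pt_lim_const p0 0)
       (derivable_pt_lim_mult _ _ 0 _ _ (derivable_pt_lim_id 0) (derivable_pt_lim_const p1 0)))
    (derivable_pt_lim_mult _ _ 0 _ _
       (derivable_pt_lim_mult _ _ 0 _ _ (derivable_pt_lim_id 0) (derivable_pt_lim_id 0))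
       (derivable_pt_lim_const p2 0))) as H.
  unfold fct_cte, id, mult_fct, plus_fct in H.
  replace (0 + (1 * p1 + 0 * 0) + ((1 * 0 + 0 * 1) * p2 + 0 * 0 * 0)) with p1 in H by ring.
  exact H.
Qed.

Lemma derivable_pt_lim_eq_value f x l l' :
  derivable_pt_lim f x l -> l = l' -> derivable_pt_lim f x l'.
Proof. intros H <-. exact H. Qed.

Lemma derivable_pt_lim_quadratic_ratio p0 p1 p2 c1 c2 :
  derivable_pt_lim (fun t => (p0 + t * p1 + t * t * p2) / (1 + t * c1 + t * t * c2)) 0
                   (p1 - p0 * c1).
Proof.
  pose proof (derivable_pt_lim_div _ _ 0 _ _ (derivable_pt_lim_quadratic p0 p1 p2)
                (derivable_pt_lim_quadratic 1 c1 c2)) as H.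
  replace (p1 - p0 * c1) with
    ((p1 * (1 + 0 * c1 + 0 * 0 * c2) - c1 * (p0 + 0 * p1 + 0 * 0 * p2))
       / Rsqr (1 + 0 * c1 + 0 * 0 * c2)) by (unfold Rsqr; field).
  apply H. lra.
Qed.

Lemma derivable_pt_lim_quadratic_ratio_ext f p0 p1 p2 c1 c2 :
  (forall t, f t = (p0 + t * p1 + t * t * p2) / (1 + t * c1 + t * t * c2)) ->
  derivable_pt_lim f 0 (p1 - p0 * c1).
Proof.
  intros E. replace f with (fun t => (p0 + t * p1 + t * t * p2) / (1 + t * c1 + t * t * c2)).
  - apply derivable_pt_lim_quadratic_ratio.
  - apply functional_extensionality. intros t. auto.
Qed.

Lemma quadratic_near_one_pos a b t :
  Rabs t < / (2 * (Rabs a + Rabs b + 1)) -> 0 < 1 + t * a + t * t * b.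
Proof.
  intros H. pose proof (Rabs_pos a); pose proof (Rabs_pos b); pose proof (Rabs_pos t).
  assert (Hs : Rabs t * (2 * (Rabs a + Rabs b + 1)) < 1).
  { apply (Rmult_lt_compat_r (2 * (Rabs a + Rabs b + 1))) in H; [|lra].
    rewrite Rinv_l in H; lra. }
  assert (Ha : - (Rabs t * Rabs a) <= t * a).
  { rewrite <- Rabs_mult. pose proof (Rle_abs (- (t * a))) as E. rewrite Rabs_Ropp in E. lra. }
  assert (Hb : - (Rabs t * Rabs t * Rabs b) <= t * t * b).
  { rewrite <- !Rabs_mult. pose proof (Rle_abs (- (t * t * b))) as E. rewrite Rabs_Ropp in E. lra. }
  assert (Rabs t < 1) by nra.
  assert (Rabs t * Rabs t <= Rabs t) by nra.
  assert (Rabs t * Rabs t * Rabs b <= Rabs t * Rabs b) by nra.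
  nra.
Qed.

Section CongruenceCurve.
Variables (n k : nat) (rho B : Mat).

Definition pert (t : R) : Mat := madd mone (mscal (RtoC t) B).
Definition congr (t : R) : Mat := mmul n (mmul n (pert t) rho) (ctr (pert t)).
Definition lin_coeff : Mat := madd (mmul n B rho) (mmul n rho (ctr B)).
Definition quad_coeff : Mat := mmul n (mmul n B rho) (ctr B).
Definition congr_trace (t : R) : R := Re (tr n (congr t)).
Definition curve (t : R) : Mat := mscal (RtoC (/ congr_trace t)) (congr t).
Definition velocity : Mat := msub lin_coeff (mscal (RtoC (Re (tr n lin_coeff))) rho).

Lemma ctr_pert t : ctr (pert t) = madd mone (mscal (RtoC t) (ctr B)).
Proof. unfold pert. rewrite ctr_madd, ctr_mone, ctr_mscal_RtoC. reflexivity. Qed.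

Lemma congr_expand t :
  meq n (congr t) (madd rho (madd (mscal (RtoC t) lin_coeff) (mscal (RtoC (t * t)) quad_coeff))).
Proof.
  intros i j Hi Hj. unfold congr. rewrite ctr_pert. unfold pert.
  rewrite !mmul_madd_l, !mmul_madd_r, !mmul_mscal_l, !mmul_mscal_r.
  unfold madd, mscal, lin_coeff, quad_coeff. rewrite !mmul_one_r by auto.
  rewrite (mmul_assoc n mone rho (ctr B)), !mmul_one_l by auto.
  unfold madd. C_ring.
Qed.

Lemma velocity_hermitian : Hermitian n rho -> Hermitian n velocity.
Proof.
  intros Hh i j Hi Hj. unfold velocity. set (r := Re (tr n lin_coeff)).
  unfold lin_coeff, msub, madd, mscal.
  rewrite (mmul_ctr_hermitian_conj n rho B i j), (mmul_ctr_hermitian_conj n rho B j i), Hh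
    by auto.
  C_ring.
Qed.

Hypothesis Hrho : density_rank n k rho.

Lemma congr_hermitian t : Hermitian n (congr t).
Proof.
  destruct Hrho as [Hh _]. apply hermitian_ctr. unfold congr at 1.
  rewrite !ctr_mmul, ctr_ctr, <- mmul_assoc. apply mmul_meq_l, mmul_meq_r.
  apply hermitian_ctr; auto.
Qed.

Lemma congr_trace_expand t :
  congr_trace t = 1 + t * Re (tr n lin_coeff) + t * t * Re (tr n quad_coeff).
Proof.
  destruct Hrho as (_ & _ & Htr & _).
  unfold congr_trace. rewrite (tr_meq _ _ _ (congr_expand t)), !tr_madd, !tr_mscal, Htr.
  simpl. ring.
Qed.

Lemma curve_hermitian t : Hermitian n (curve t).
Proof.
  intros i j Hi Hj. unfold curve, mscal.
  rewrite (congr_hermitian t i j Hi Hj), Cconj_mul, Cconj_RtoC. reflexivity.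
Qed.

Lemma curve_tr t : congr_trace t <> 0 -> tr n (curve t) = C1.
Proof.
  intros H. unfold curve. rewrite tr_mscal.
  replace (tr n (congr t)) with (RtoC (congr_trace t)).
  - apply C_eq; simpl; field; auto.
  - apply C_eq; [reflexivity|]. symmetry. apply tr_hermitian_real, congr_hermitian.
Qed.

Lemma curve_psd t : 0 < congr_trace t -> PSD n (curve t).
Proof.
  intros Ht. destruct Hrho as (_ & Hpsd & _). rewrite PSD_dot in *. intros x.
  unfold curve. rewrite dot_appv_mscal_RtoC. simpl. rewrite Rmult_0_l, Rminus_0_r.
  apply Rmult_le_pos; [left; apply Rinv_0_lt_compat; auto|].
  unfold congr. rewrite mmul_assoc, !appv_mmul, dot_appv_adjoint. apply Hpsd.
Qed.

Lemma curve_rank t : 0 < congr_trace t -> injv n (pert t) -> injv n (ctr (pert t)) ->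
  rank_eq n (curve t) k.
Proof.
  intros Ht HM HMc. destruct Hrho as (_ & _ & _ & Hrk).
  destruct (right_inverse_of_injective n _ HMc) as [N HN].
  replace (curve t)
    with (mmul n (pert t) (mmul n rho (mscal (RtoC (/ congr_trace t)) (ctr (pert t)))))
    by (unfold curve, congr; rewrite !mmul_mscal_r, <- mmul_assoc; reflexivity).
  apply (rank_eq_mmul n k rho _ _ (mscal (RtoC (congr_trace t)) N)); auto.
  rewrite mmul_assoc, mmul_mscal_l, !mmul_mscal_r.
  intros i j Hi Hj. unfold mscal.
  rewrite (mmul_meq_r n rho _ _ HN i j Hi Hj), mmul_one_r by auto.
  apply C_eq; simpl; field; lra.
Qed.

Lemma curve_density_rank : exists eps, 0 < eps /\
  forall t, Rabs t < eps -> density_rank n k (curve t).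
Proof.
  destruct (perturbed_identity_injective n B) as [d1 [Hd1 HB]].
  destruct (perturbed_identity_injective n (ctr B)) as [d2 [Hd2 HBc]].
  set (c1 := Re (tr n lin_coeff)). set (c2 := Re (tr n quad_coeff)).
  set (e0 := / (2 * (Rabs c1 + Rabs c2 + 1))).
  assert (He0 : 0 < e0).
  { apply Rinv_0_lt_compat. pose proof (Rabs_pos c1); pose proof (Rabs_pos c2); lra. }
  exists (Rmin e0 (Rmin d1 d2)). split; [repeat apply Rmin_glb_lt; auto|].
  intros t Ht. apply Rmin_Rgt_l in Ht as [Ht0 Ht]. apply Rmin_Rgt_l in Ht as [Ht1 Ht2].
  assert (Htr : 0 < congr_trace t)
    by (rewrite congr_trace_expand; apply quadratic_near_one_pos; auto).
  split; [|split; [|split]].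
  - apply curve_hermitian.
  - apply curve_psd; auto.
  - apply curve_tr; lra.
  - apply curve_rank; [| apply HB | rewrite ctr_pert; apply HBc]; auto.
Qed.

Lemma curve_entry t i j : (i < n)%nat -> (j < n)%nat ->
  curve t i j = Cmul (RtoC (/ (1 + t * Re (tr n lin_coeff) + t * t * Re (tr n quad_coeff))))
    (Cadd (rho i j) (Cadd (Cmul (RtoC t) (lin_coeff i j)) (Cmul (RtoC (t * t)) (quad_coeff i j)))).
Proof.
  intros Hi Hj. unfold curve, mscal. rewrite congr_expand, congr_trace_expand by auto.
  reflexivity.
Qed.

Lemma curve_derivative i j : (i < n)%nat -> (j < n)%nat ->
  derivable_pt_lim (fun t => Re (curve t i j)) 0 (Re (velocity i j)) /\
  derivable_pt_lim (fun t => Im (curve t i j)) 0 (Im (velocity i j)).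
Proof.
  intros Hi Hj. split.
  - eapply derivable_pt_lim_eq_value.
    + apply (derivable_pt_lim_quadratic_ratio_ext _ (Re (rho i j)) (Re (lin_coeff i j))
               (Re (quad_coeff i j)) (Re (tr n lin_coeff)) (Re (tr n quad_coeff))).
      intros t. rewrite curve_entry by auto. simpl. unfold Rdiv. ring.
    + unfold velocity, msub, mscal. simpl. ring.
  - eapply derivable_pt_lim_eq_value.
    + apply (derivable_pt_lim_quadratic_ratio_ext _ (Im (rho i j)) (Im (lin_coeff i j))
               (Im (quad_coeff i j)) (Re (tr n lin_coeff)) (Re (tr n quad_coeff))).
      intros t. rewrite curve_entry by auto. simpl. unfold Rdiv. ring.
    + unfold velocity, msub, mscal. simpl. ring.
Qed.

Lemma curve_at_0 : meq n (curve 0) rho.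
Proof.
  intros i j Hi Hj. rewrite curve_entry by auto. apply C_eq; simpl; field.
Qed.

Lemma congruence_curve_tangent : TangentTo n (density_rank n k) rho velocity.
Proof.
  destruct curve_density_rank as (eps & Heps & Hcurve).
  exists eps. split; auto. exists curve.
  split; [apply curve_at_0 | split; [exact Hcurve | exact curve_derivative]].
Qed.
End CongruenceCurve.

Lemma TangentTo_meq n S rho v w : meq n v w -> TangentTo n S rho w -> TangentTo n S rho v.
Proof.
  intros E (eps & Heps & gamma & H0 & HS & Hd). exists eps. split; auto. exists gamma.
  split; [|split]; auto. intros i j Hi Hj. rewrite E by auto. auto.
Qed.

Lemma velocity_scaled_hermitian n rho a z : Hermitian n a ->
  meq n (velocity n rho (mscal z a))
    (msub (madd (mscal z (mmul n a rho)) (mscal (Cconj z) (mmul n rho a)))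
          (mscal (RtoC (Re (Cmul (Cadd z (Cconj z)) (tr n (mmul n rho a))))) rho)).
Proof.
  intros Ha.
  assert (Hlin : meq n (lin_coeff n rho (mscal z a))
                   (madd (mscal z (mmul n a rho)) (mscal (Cconj z) (mmul n rho a)))).
  { intros i j Hi Hj. unfold lin_coeff, madd. rewrite mmul_mscal_l.
    f_equal. rewrite <- mmul_mscal_r. apply mmul_meq_r; auto.
    intros l m Hl Hm. unfold ctr, mscal. rewrite Cconj_mul, <- Ha by auto. reflexivity. }
  intros i j Hi Hj. unfold velocity, msub. rewrite Hlin, (tr_meq _ _ _ Hlin) by auto.
  rewrite tr_madd, !tr_mscal, (tr_mmulC n a rho).
  replace (Cadd (Cmul z (tr n (mmul n rho a))) (Cmul (Cconj z) (tr n (mmul n rho a))))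
    with (Cmul (Cadd z (Cconj z)) (tr n (mmul n rho a))) by ring.
  reflexivity.
Qed.

(** * Differentials and the tensors [Lambda_D], [R_D] *)

Lemma f_line n b rho eta t :
  f_ n b (madd rho (mscal (RtoC t) eta)) = f_ n b rho + t * Re (tr n (mmul n eta b)).
Proof. unfold f_. rewrite mmul_madd_l, mmul_mscal_l, tr_madd, tr_mscal. simpl. ring. Qed.

Lemma f_mone n X : f_ n mone X = Re (tr n X).
Proof. unfold f_. rewrite tr_mmul_one. reflexivity. Qed.

Lemma IsDiff_f_mone n rho : IsDiff n (f_ n mone) rho mone.
Proof.
  intros eta _. rewrite tr_one_mmul.
  eapply derivable_pt_lim_eq_value.
  - apply (derivable_pt_lim_quadratic_ratio_ext _ (f_ n mone rho) (Re (tr n eta)) 0 0 0).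
    intros t. rewrite f_line, tr_mmul_one. field.
  - ring.
Qed.

Lemma IsDiff_e n b rho : f_ n mone rho = 1 ->
  IsDiff n (e_ n b) rho (madd b (mscal (RtoC (- f_ n b rho)) mone)).
Proof.
  intros HI eta _. eapply derivable_pt_lim_eq_value.
  - apply (derivable_pt_lim_quadratic_ratio_ext _ (f_ n b rho) (Re (tr n (mmul n eta b))) 0
             (Re (tr n eta)) 0).
    intros t. unfold e_. rewrite !f_line, HI, tr_mmul_one. f_equal; ring.
  - rewrite mmul_madd_l, mmul_mscal_l, tr_madd, tr_mscal, tr_one_mmul, (tr_mmulC n b eta).
    simpl. ring.
Qed.

Lemma hermitian_shift_mone n b r : Hermitian n b -> Hermitian n (madd b (mscal (RtoC r) mone)).
Proof.
  intros Hb i j Hi Hj. unfold madd, mscal.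
  rewrite Hb, (mone_hermitian n i j) by auto. rewrite Cconj_add, Cconj_mul, Cconj_RtoC. reflexivity.
Qed.

(* Write [dg = (dg - g(rho) I) + g(rho) I]: the first summand is [d e_g] (as
   [f_I(rho) = 1]) and the pairing with [df_I] vanishes. *)
Lemma represents_field_of_tensor n T F rho a ca v :
  tensor_on_U_with n T F -> Hermitian n rho -> tr n rho = C1 ->
  Hermitian n a -> Hermitian n ca -> IsDiff n (e_ n a) rho ca ->
  (forall cg, Hermitian n cg -> F a cg rho = Re (tr n (mmul n cg v))) ->
  represents_field n T rho ca v.
Proof.
  intros [Hbil Hten] Hh Htr Ha Hca Hdca HF g cg Hcg _.
  assert (HI : f_ n mone rho = 1) by (rewrite f_mone, Htr; reflexivity).
  assert (HU : inU n rho) by (unfold inU; rewrite HI; lra).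
  set (r := f_ n cg rho). set (cb := madd cg (mscal (RtoC (- r)) mone)).
  assert (Hcb : Hermitian n cb) by (apply hermitian_shift_mone; auto).
  destruct (Hten rho Hh HU a cg ca cb mone Ha Hcg Hca Hcb (mone_hermitian n) Hdca
              (IsDiff_e n cg rho HI) (IsDiff_f_mone n rho)) as (E1 & _ & E3 & _).
  destruct (Hbil rho Hh HU cb mone ca r Hcb (mone_hermitian n) Hca) as [_ Hlin].
  replace cg with (madd cb (mscal (RtoC r) mone)) at 1
    by (unfold cb; mat_ext; unfold madd, mscal; C_ring).
  rewrite Hlin, E1, E3, <- HF by auto. ring.
Qed.

Lemma e_unit_trace n b rho : tr n rho = C1 -> e_ n b rho = f_ n b rho.
Proof. intros Htr. unfold e_. rewrite f_mone, Htr. simpl. field. Qed.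

Lemma tr_mmul_cycle n A B D : tr n (mmul n A (mmul n B D)) = tr n (mmul n D (mmul n A B)).
Proof. rewrite tr_mmulC, mmul_assoc, tr_mmulC, mmul_assoc. reflexivity. Qed.

Lemma f_bracket n rho a c :
  f_ n (bracket n a c) rho =
  Re (tr n (mmul n c (mscal (mkC 0 (1/2)) (msub (mmul n a rho) (mmul n rho a))))).
Proof.
  unfold f_, bracket. rewrite !mmul_mscal_r, !mmul_msub_r, !tr_mscal, !tr_msub.
  rewrite (tr_mmul_cycle n rho a c), (tr_mmulC n rho (mmul n c a)), mmul_assoc.
  simpl. ring.
Qed.

Lemma f_jordan n rho a c : Hermitian n rho -> Hermitian n a ->
  f_ n (jordan n a c) rho - f_ n a rho * f_ n c rho =
  Re (tr n (mmul n c (msub (jordan n a rho) (mscal (tr n (mmul n rho a)) rho)))).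
Proof.
  intros Hh Ha. pose proof (tr_hermitian_mmul_real n rho a Hh Ha) as Him.
  unfold f_, jordan. rewrite !mmul_mscal_r, mmul_msub_r, !mmul_mscal_r, !mmul_madd_r.
  rewrite tr_msub, !tr_mscal, !tr_madd.
  rewrite (tr_mmul_cycle n rho a c), (tr_mmulC n rho (mmul n c a)), mmul_assoc,
    (tr_mmulC n rho c).
  simpl. rewrite Him. ring.
Qed.

Theorem mainTheorem5 (n k : nat) (Lam Rt : Tensor2) :
  (1 <= k <= n)%nat ->
  is_Lambda_D n Lam -> is_R_D n Rt ->
  forall a : Mat, Hermitian n a ->
  forall rho : Mat, density_rank n k rho ->
  forall ca : Mat, Hermitian n ca -> IsDiff n (e_ n a) rho ca ->
  let vX := mscal (mkC 0 (1/2)) (msub (mmul n a rho) (mmul n rho a)) in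
  let vY := msub (jordan n a rho) (mscal (tr n (mmul n rho a)) rho) in
  (Hermitian n vX /\ represents_field n Lam rho ca vX /\
   TangentTo n (density_rank n k) rho vX) /\
  (Hermitian n vY /\ represents_field n Rt rho ca vY /\
   TangentTo n (density_rank n k) rho vY).
Proof.
  intros _ HL HR a Ha rho Hrho ca Hca Hdca vX vY.
  pose proof Hrho as (Hh & _ & Htr & _).
  assert (HvX : meq n vX (velocity n rho (mscal (mkC 0 (1/2)) a))).
  { intros i j Hi Hj. rewrite velocity_scaled_hermitian by auto.
    unfold vX, msub, madd, mscal. C_ring. }
  assert (HvY : meq n vY (velocity n rho (mscal (RtoC (1/2)) a))).
  { pose proof (tr_hermitian_mmul_real n rho a Hh Ha) as Him.
    intros i j Hi Hj. rewrite velocity_scaled_hermitian by auto.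
    unfold vY, jordan, msub, madd, mscal. apply C_eq; simpl; rewrite Him; field. }
  split; (split; [|split]).
  - eapply hermitian_meq; [exact HvX | apply velocity_hermitian; auto].
  - apply (represents_field_of_tensor n Lam _ rho a ca vX HL); auto.
    intros cg _. rewrite e_unit_trace by auto. apply f_bracket.
  - eapply TangentTo_meq; [exact HvX | apply congruence_curve_tangent; auto].
  - eapply hermitian_meq; [exact HvY | apply velocity_hermitian; auto].
  - apply (represents_field_of_tensor n Rt _ rho a ca vY HR); auto.
    intros cg _. rewrite !e_unit_trace by auto. apply f_jordan; auto.
  - eapply TangentTo_meq; [exact HvY | apply congruence_curve_tangent; auto].
Qed.
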